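(* Fix positive integers $k,x^*$, a real number $n'$ treated as an indeterminate, and real numbers $b_1,\dots,b_k$ (indices mod $k$). For $x=(x_1,\dots,x_k)\in\{0,\dots,x^*\}^k$ consider $$E_x(n')=\sum_{i=1}^{k}\prod_{j=1}^{k}\prod_{h=x_j+1}^{x^*}(n'-b_{j+i}+h),$$ a polynomial in $n'$ of degree $L=\sum_{j=1}^k(x^*-x_j)$. Then for every integer $m\ge 0$, the coefficient of $n'^{\,L-m}$ in $E_x(n')$ is a linear combination of cyclic statistics of $x$ of order at most $m$, each multiplied by some function of $x$ that is invariant under permutations of $(x_1,\dots,x_k)$ (these functions and the statistics used may depend on $b$ and $x^*$ but are the same for all $x$).
   Context: For indices $i_1,\dots,i_r$ (mod $k$), the cyclic statistic of order $r$ is $S_{i_1,\dots,i_r}(x)=\sum_{j=1}^{k}x_{i_1+j}\cdots x_{i_r+j}$; a cyclic statistic of order $0$ is understood as a constant. *)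

From HB Require Import structures.
From mathcomp Require Import all_boot all_order all_fingroup all_algebra.
From mathcomp Require Import reals.
Set Implicit Arguments. Unset Strict Implicit. Unset Printing Implicit Defensive.
Import Order.TTheory GRing.Theory Num.Theory.
Local Open Scope ring_scope.

Definition cshift (k : nat) (i j : 'I_k) : 'I_k :=
  Ordinal (ltn_pmod (i + j) (leq_ltn_trans (leq0n i) (ltn_ord i))).

Definition cycstat (R : nzRingType) (k : nat) (t : seq 'I_k) (x : 'I_k -> nat) : R :=
  \sum_(j < k) \prod_(i <- t) ((x (cshift i j))%:R : R).

Definition Epoly (R : nzRingType) (k xs : nat) (b : 'I_k -> R) (x : 'I_k -> nat)
  : {poly R} :=
  \sum_(i < k) \prod_(j < k) \prod_((x j).+1 <= h < xs.+1)
      ('X - (b (cshift j i))%:P + (h%:R)%:P).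

Definition Ldeg (k xs : nat) (x : 'I_k -> nat) : nat := (\sum_(j < k) (xs - x j))%N.

Definition Ecoef (R : nzRingType) (k xs : nat) (b : 'I_k -> R) (x : 'I_k -> nat)
  (m : nat) : R :=
  if (m <= Ldeg xs x)%N then (Epoly xs b x)`_(Ldeg xs x - m) else 0.

Definition perm_invariant (R : Type) (k xs : nat) (f : ('I_k -> 'I_xs.+1) -> R) :=
  forall (x : 'I_k -> 'I_xs.+1) (s : {perm 'I_k}), f (x \o s) = f x.

(* After reindexing, the summand of E_x indexed by -i is the product of the
   (n' + a) over the multiset A_i of the h - b_u with x_(u+i) < h <= x*, so the
   coefficient of n'^(L-m) is the sum over i of e_m(A_i).  By Newton's identities
   e_m is a polynomial of weight m in the power sums p_1, ..., p_m.  Writing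
   (h - b_u)^r = h^r + D_u(h) with deg D_u < r, the power sum p_r(A_i) is the
   permutation-invariant sum over j of the h^r with x_j < h <= x*, plus the sum
   over u of polynomials of degree at most r in x_(u+i), since summing a
   polynomial over h raises its degree by one.  So e_m(A_i) is a combination of
   monomials of degree at most m in the shifted variables x_(u+i) with
   permutation-invariant coefficients, and summing over i turns these monomials
   into cyclic statistics. *)

From HB Require Import structures.
From mathcomp Require Import all_boot all_order all_fingroup all_algebra.
From mathcomp Require Import reals.
From mathcomp Require Import ring.
Set Implicit Arguments. Unset Strict Implicit. Unset Printing Implicit Defensive.
Import Order.TTheory GRing.Theory Num.Theory.
Local Open Scope ring_scope.

Section ElementarySymmetric.
Variable R : comNzRingType.
Implicit Types (s : seq R) (a : R).

Fixpoint esym s m : R :=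
  match s, m with
  | [::], _ => (m == 0%N)%:R
  | _ :: _, 0 => 1
  | a :: s', m'.+1 => esym s' m + a * esym s' m'
  end.

Arguments esym : simpl nomatch.

Definition psum s r : R := \sum_(a <- s) a ^+ r.

Lemma esym0 s : esym s 0 = 1.
Proof. by case: s. Qed.

Lemma esym_gt_size s m : (size s < m)%N -> esym s m = 0.
Proof.
elim: s m => [|a s IH] [|m] //= /[!ltnS] ltsm.
by rewrite !IH ?mulr0 ?addr0 // ltnW.
Qed.

Lemma coef_prod_XaddC s j :
  (\prod_(a <- s) ('X + a%:P))`_j =
    if (j <= size s)%N then esym s (size s - j) else 0.
Proof.
elim: s j => [|a s IH] j; first by rewrite big_nil coefC; case: j.
rewrite big_cons mulrDl coefD coefXM coefCM !IH [size (a :: s)]/=.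
case: j => [|j]; first by rewrite /= !subn0 add0r /= (esym_gt_size (ltnSn _)) add0r.
rewrite ltnS subSS; case: ltngtP => [ltjs|ltsj|->].
- by rewrite -subnSK.
- by rewrite mulr0 addr0.
- by rewrite subnn !esym0 mulr0 addr0.
Qed.

Lemma sum_alt_pow_esym_cons a s m :
  \sum_(r < m.+1) (-1) ^+ r * a ^+ r.+1 * esym (a :: s) (m - r) = a * esym s m.
Proof.
elim: m => [|m IH]; first by rewrite big_ord1 expr0 !mul1r esym0 mulr1.
rewrite big_ord_recl subn0.
transitivity (a * esym (a :: s) m.+1 - a * (a * esym s m)); last by rewrite /=; ring.
rewrite -IH mulr_sumr -sumrN; congr (_ + _); first by rewrite expr0 expr1 mul1r.
by apply: eq_bigr => r _; rewrite lift0 subSS !exprS; ring.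
Qed.

Lemma newton s m :
  m%:R * esym s m = \sum_(r < m) (-1) ^+ r * esym s (m - r.+1) * psum s r.+1.
Proof.
elim: s m => [|a s IH] m.
  rewrite big1 => [|r _]; last by rewrite /psum big_nil mulr0.
  by case: m => [|m]; rewrite ?mul0r ?mulr0.
case: m => [|m]; first by rewrite big_ord0 mul0r.
have split_psum r : (-1) ^+ r * esym (a :: s) (m - r) * psum (a :: s) r.+1 =
    (-1) ^+ r * esym (a :: s) (m - r) * psum s r.+1
    + (-1) ^+ r * a ^+ r.+1 * esym (a :: s) (m - r).
  by rewrite /psum big_cons; ring.
have split_esym : \sum_(r < m.+1) (-1) ^+ r * esym (a :: s) (m - r) * psum s r.+1 =
    m.+1%:R * esym s m.+1 + a * (m%:R * esym s m).
  rewrite (IH m.+1) IH !big_ord_recr /= !subnn !esym0 [a * _]mulr_sumr.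
  rewrite addrAC -big_split.
  congr (_ + _); apply: eq_bigr => r _ /=.
  by rewrite subSS -(subnSK (ltn_ord r)) /=; ring.
under eq_bigr => r _ do rewrite subSS split_psum.
rewrite big_split /= sum_alt_pow_esym_cons split_esym mulrS; ring.
Qed.

End ElementarySymmetric.

Section CyclicCombinations.
Variables (R : comNzRingType) (k xs : nat).
Local Notation cfg := ('I_k -> 'I_xs.+1).
Implicit Types (F G : 'I_k -> cfg -> R) (t : seq 'I_k).

Definition shifted_monomial t (i : 'I_k) (x : cfg) : R :=
  \prod_(a <- t) ((x (cshift a i))%:R : R).

Definition cyccomb m F : Prop :=
  exists (I : finType) (t : I -> seq 'I_k) (f : I -> cfg -> R),
    (forall n, (size (t n) <= m)%N /\ perm_invariant (f n)) /\
    forall i x, F i x = \sum_n f n x * shifted_monomial (t n) i x.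

Lemma eq_cyccomb m F G : (forall i x, F i x = G i x) -> cyccomb m F -> cyccomb m G.
Proof.
by move=> eFG [I [t [f [tf eF]]]]; exists I, t, f; split=> // i x; rewrite -eFG.
Qed.

Lemma cyccomb_le m m' F : (m <= m')%N -> cyccomb m F -> cyccomb m' F.
Proof.
move=> lemm' [I [t [f [tf eF]]]]; exists I, t, f; split=> // n.
by have [? ?] := tf n; split=> //; apply: leq_trans lemm'.
Qed.

Lemma cyccomb0 m : cyccomb m (fun _ _ => 0).
Proof.
exists 'I_0, (fun _ => [::]), (fun _ _ => 0); split=> [[]//|i x].
by rewrite big_ord0.
Qed.

Lemma cyccomb_invariant g : perm_invariant g -> cyccomb 0 (fun _ x => g x).
Proof.
move=> g_inv; exists 'I_1, (fun _ => [::]), (fun _ => g); split=> // i x.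
by rewrite big_ord1 /shifted_monomial big_nil mulr1.
Qed.

Lemma cyccomb_shift_monomial t : cyccomb (size t) (shifted_monomial t).
Proof.
exists 'I_1, (fun _ => t), (fun _ _ => 1); split=> // i x.
by rewrite big_ord1 mul1r.
Qed.

Lemma cyccombD m F G :
  cyccomb m F -> cyccomb m G -> cyccomb m (fun i x => F i x + G i x).
Proof.
move=> [I [t [f [tf eF]]]] [J [u [g [ug eG]]]].
exists (I + J)%type, (fun n => match n with inl a => t a | inr b => u b end),
  (fun n => match n with inl a => f a | inr b => g b end).
by split=> [[a|b] //|i x]; rewrite big_sumType eF eG.
Qed.

Lemma cyccomb_sum m (T : Type) (r : seq T) (F : T -> 'I_k -> cfg -> R) :
  (forall j, cyccomb m (F j)) -> cyccomb m (fun i x => \sum_(j <- r) F j i x).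
Proof.
move=> cF; elim: r => [|j r IH].
  by apply: eq_cyccomb (cyccomb0 m) => i x; rewrite big_nil.
by apply: eq_cyccomb (cyccombD (cF j) IH) => i x; rewrite big_cons.
Qed.

Lemma cyccombM m1 m2 F G :
  cyccomb m1 F -> cyccomb m2 G -> cyccomb (m1 + m2) (fun i x => F i x * G i x).
Proof.
move=> [I [t [f [tf eF]]]] [J [u [g [ug eG]]]].
exists (I * J)%type, (fun n => t n.1 ++ u n.2), (fun n x => f n.1 x * g n.2 x).
split=> [[a b]|i x].
  have [st fi] := tf a; have [su gi] := ug b.
  by split=> [|x s]; rewrite ?size_cat ?leq_add //= fi gi.
rewrite eF eG big_distrlr pair_bigA; apply: eq_bigr => -[a b] _ /=.
by rewrite /shifted_monomial big_cat /=; ring.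
Qed.

Lemma cyccombZ m F g :
  perm_invariant g -> cyccomb m F -> cyccomb m (fun i x => g x * F i x).
Proof. by move=> /cyccomb_invariant cg /(cyccombM cg). Qed.

Lemma cyccomb_horner_shift d (P : {poly R}) (u : 'I_k) : (size P <= d.+1)%N ->
  cyccomb d (fun i x => P.[(x (cshift u i))%:R]).
Proof.
move=> sP.
have monomial_term (l : 'I_d.+1) :
    cyccomb d (fun i x => P`_l * shifted_monomial (nseq l u) i x).
  apply: (cyccombZ (g := fun _ => P`_l)) => //.
  by apply: cyccomb_le (cyccomb_shift_monomial _); rewrite size_nseq -ltnS.
apply: eq_cyccomb (cyccomb_sum (index_enum _) monomial_term) => i x.
rewrite (horner_coef_wide _ sP); apply: eq_bigr => l _.
by rewrite /shifted_monomial big_nseq iter_mulr_1.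
Qed.

Lemma cyccomb_cycstat m F : cyccomb m F ->
  exists (N : nat) (t : 'I_N -> seq 'I_k) (f : 'I_N -> cfg -> R),
    (forall n, (size (t n) <= m)%N /\ perm_invariant (f n)) /\
    forall x, \sum_(i < k) F i x =
      \sum_(n < N) f n x * @cycstat R k (t n) (fun j => nat_of_ord (x j)).
Proof.
move=> [I [t [f [tf eF]]]].
exists #|I|, (fun n => t (enum_val n)), (fun n => f (enum_val n)); split=> // x.
under eq_bigr do rewrite eF.
rewrite exchange_big (reindex _ (onW_bij _ (@enum_val_bij I))) /=.
by apply: eq_bigr => n _; rewrite /cycstat mulr_sumr.
Qed.

End CyclicCombinations.

Section PolynomialSums.
Variable R : numFieldType.
Implicit Types p P Q : {poly R}.

Lemma poly_antidifference n p : (size p <= n)%N ->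
  exists P, (size P <= n.+1)%N /\ forall z : R, P.[z + 1] - P.[z] = p.[z].
Proof.
elim: n p => [|n IH] p sp.
  move: sp; rewrite size_poly_leq0 => /eqP ->.
  by exists 0; split=> [|z]; rewrite ?size_poly0 // !horner0 subr0.
 pose T : {poly R} := \poly_(i < n.+1) 'C(n.+1, i)%:R.
have T_eval z : T.[z] = (z + 1) ^+ n.+1 - z ^+ n.+1.
  rewrite horner_poly exprD1n (big_ord_recr n.+1) /= binn mulr1n addrK.
  by apply: eq_bigr => i _; rewrite mulr_natl.
pose c := p`_n / n.+1%:R.
have [Q [sQ eQ]] : exists Q, (size Q <= n.+1)%N /\
    forall z : R, Q.[z + 1] - Q.[z] = (p - c *: T).[z].
  apply: IH; apply/leq_sizeP => j; rewrite leq_eqVlt => /predU1P[<-|ltnj].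
    by rewrite coefB coefZ coef_poly ltnSn binSn mulfVK ?subrr ?pnatr_eq0.
  by rewrite coefB coefZ coef_poly ltnNge ltnj mulr0 subr0 (leq_sizeP _ _ sp).
exists (Q + c *: 'X^(n.+1)); split.
  rewrite (leq_trans (size_polyD _ _)) // geq_max (leq_trans sQ) //=.
  by rewrite (leq_trans (size_scale_leq _ _)) // size_polyXn.
move=> z; have := eQ z; rewrite !hornerE T_eval => eQz.
by rewrite -[p.[z]](subrK (c * ((z + 1) ^+ n.+1 - z ^+ n.+1))) -eQz; ring.
Qed.

Lemma sum_poly_tail n xs p : (size p <= n)%N ->
  exists P, (size P <= n.+1)%N /\
    forall y, (y <= xs)%N -> \sum_(y.+1 <= h < xs.+1) p.[h%:R] = P.[y%:R].
Proof.
move=> sp; have [P [sP eP]] := poly_antidifference sp.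
exists ((P.[xs.+1%:R])%:P - P - p); split.
  rewrite (leq_trans (size_polyD _ _)) // geq_max size_polyN (leq_trans sp) // andbT.
  rewrite (leq_trans (size_polyD _ _)) // geq_max size_polyN sP andbT.
  exact: leq_trans (size_polyC_leq1 _) _.
move=> y lexy; rewrite !hornerE.
rewrite (telescope_sumr_eq (fun h => P.[h%:R])) ?ltnS // => [|h _].
  by rewrite -!natr1 -eP; ring.
by rewrite -natr1 eP.
Qed.

End PolynomialSums.

Lemma cshiftE n (i j : 'I_n.+1) : cshift i j = i + j.
Proof. exact: val_inj. Qed.

Section Coefficients.
Variables (R : numFieldType) (n xs : nat) (b : 'I_n.+1 -> R).

(* Reindexed by j = u + i and i |-> -i, so that [b] is not shifted: the summand
   [-i] of [Epoly xs b x] is the product of the ['X + a%:P] over [Econsts x i]. *)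
Definition Econsts (x : 'I_n.+1 -> nat) (i : 'I_n.+1) : seq R :=
  [seq h%:R - b u | u <- index_enum 'I_n.+1, h <- index_iota (x (u + i)).+1 xs.+1].

Lemma Epoly_Econsts x :
  Epoly xs b x = \sum_i \prod_(a <- Econsts x i) ('X + a%:P).
Proof.
rewrite /Epoly (reindex_inj oppr_inj) /=; apply: eq_bigr => i _.
rewrite (reindex_inj (addIr i)) big_allpairs_dep /=; apply: eq_bigr => u _.
by apply: eq_bigr => h _; rewrite cshiftE addrK polyCB addrA addrAC.
Qed.

Lemma size_Econsts x i : size (Econsts x i) = Ldeg xs x.
Proof.
rewrite size_allpairs_dep /Ldeg (reindex_inj (addIr i)) sumnE big_map /=.
by apply: eq_bigr => u _; rewrite size_iota subSS.
Qed.

Lemma Ecoef_Econsts x m : Ecoef xs b x m = \sum_i esym (Econsts x i) m.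
Proof.
rewrite /Ecoef Epoly_Econsts coef_sum; case: ifP => [lemL|/negbT].
  by apply: eq_bigr => i _; rewrite coef_prod_XaddC size_Econsts leq_subr subKn.
rewrite -ltnNge => ltLm; rewrite big1 // => i _.
by rewrite esym_gt_size // size_Econsts.
Qed.

Local Notation cfg := ('I_n.+1 -> 'I_xs.+1).

Lemma cyccomb_psum r :
  cyccomb r (fun i (x : cfg) => psum (Econsts (fun j => x j) i) r).
Proof.
(* [(h - b u) ^+ r = h ^+ r + (D u).[h]]: the sum of the [h ^+ r] is
   permutation invariant, and the sum of the [(D u).[h]] over [h] is a
   polynomial of degree at most [r] in [x (u + i)]. *)
pose D u : {poly R} := ('X - (b u)%:P) ^+ r - 'X^r.
have sizeD u : (size (D u) <= r)%N.
  have /monicP lcD := monic_exp r (monicXsubC (b u)).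
  apply/leq_sizeP => j; rewrite leq_eqVlt coefB coefXn => /predU1P[<-|ltrj].
    by move: lcD; rewrite /lead_coef size_exp_XsubC => ->; rewrite eqxx subrr.
  by rewrite gtn_eqF // subr0 (leq_sizeP _ _ _ _ ltrj) // size_exp_XsubC.
have tail_D u : cyccomb r (fun i (x : cfg) =>
    \sum_((x (u + i)).+1 <= h < xs.+1) (D u).[h%:R]).
  have [P [sP eP]] := sum_poly_tail xs (sizeD u).
  apply: eq_cyccomb (cyccomb_horner_shift xs u sP) => i x.
  by rewrite cshiftE eP // -ltnS.
pose H (y : nat) := \sum_(y.+1 <= h < xs.+1) (h%:R : R) ^+ r.
have sym_H : perm_invariant (fun x : cfg => \sum_j H (x j)).
  by move=> x s; rewrite [RHS](reindex_inj (@perm_inj _ s)).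
apply: eq_cyccomb (cyccombD (cyccomb_le (leq0n r) (cyccomb_invariant sym_H))
  (cyccomb_sum (index_enum _) tail_D)) => i x /=.
rewrite /psum big_allpairs_dep (reindex_inj (addIr i)) -big_split /=.
apply: eq_bigr => u _; rewrite -big_split /=; apply: eq_bigr => h _.
by rewrite !hornerE /= addrAC subrr add0r.
Qed.

Lemma cyccomb_esym m :
  cyccomb m (fun i (x : cfg) => esym (Econsts (fun j => x j) i) m).
Proof.
elim/ltn_ind: m => -[_|m IH].
  by apply: eq_cyccomb (cyccomb_invariant (g := fun _ => 1) _) => // i x; rewrite esym0.
have newton_term (r : 'I_m.+1) : cyccomb m.+1 (fun i (x : cfg) =>
    (-1) ^+ r * esym (Econsts (fun j => x j) i) (m.+1 - r.+1)
    * psum (Econsts (fun j => x j) i) r.+1).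
  have lt_r : (m.+1 - r.+1 < m.+1)%N by rewrite subSS ltnS leq_subr.
  have esym_term := cyccombZ (g := fun _ => (-1) ^+ r) (fun _ _ => erefl) (IH _ lt_r).
  by apply: cyccomb_le (cyccombM esym_term (cyccomb_psum _)); rewrite subnK.
have newton_sum := cyccomb_sum (index_enum _) newton_term.
apply: eq_cyccomb (cyccombZ (g := fun _ => m.+1%:R^-1) _ newton_sum) => // i x.
by rewrite -newton mulKf ?pnatr_eq0.
Qed.

End Coefficients.

Theorem lemma5p2 (R : realType) (k xs : nat) (hk : (0 < k)%N) (hxs : (0 < xs)%N)
  (b : 'I_k -> R) (m : nat) :
  exists (N : nat) (t : 'I_N -> seq 'I_k) (f : 'I_N -> ('I_k -> 'I_xs.+1) -> R),
    (forall n : 'I_N, (size (t n) <= m)%N /\ perm_invariant (f n)) /\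
    forall x : 'I_k -> 'I_xs.+1,
      Ecoef xs b (fun j => nat_of_ord (x j)) m =
      \sum_(n < N) f n x * @cycstat R k (t n) (fun j => nat_of_ord (x j)).
Proof.
case: k hk b => // n _ b.
have [N [t [f [tf eF]]]] := cyccomb_cycstat (cyccomb_esym xs b m).
by exists N, t, f; split=> // x; rewrite Ecoef_Econsts eF.
Qed.
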